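(* For every set $\Gamma$ of formulas and every formula $\alpha$ of the language of $\mathbb{F}$ containing no nested modal operators, $\Gamma\models^{\mathbb{F}}\alpha$ if and only if $\Gamma^*\models\alpha^*$, where $\Gamma^*=\{\gamma^*:\gamma\in\Gamma\}$.
   Context: Propositional formulas are built from a countable set of variables with $\bot,\land,\lor,\to,\leftrightarrow,\neg$. The language of $\mathbb{F}$ adds unary $\Box,\lozenge$ and dyadic $\bigcirc(\psi/\varphi)$; a formula has no nested modal operators (is flat) if $\Box,\lozenge,\bigcirc$ are applied only to propositional formulas. A preference model is $\langle S,\succeq,V\rangle$ with $S$ a set, $\succeq\subseteq S\times S$ arbitrary, $V$ a valuation; for a set $X\subseteq S$, $\mathit{most}(X)=\{s\in X:\forall v\in X\,(v\succeq s\Rightarrow s\succeq v)\}$; it satisfies limitedness if for every formula $\varphi$, $\|\varphi\|\neq\emptyset\Rightarrow\mathit{most}(\|\varphi\|)\neq\emptyset$, where $\|\varphi\|$ is the truth set. Truth: Boolean clauses as usual; $\Box\varphi$ holds at $s$ iff $\varphi$ holds at every state; $\lozenge\varphi$ iff $\varphi$ holds at some state; $\bigcirc(\psi/\varphi)$ holds at $s$ iff $\mathit{most}(\|\varphi\|)\subseteq\|\psi\|$. $\Gamma\models^{\mathbb{F}}\alpha$ means: in every preference model satisfying limitedness, at every state where all of $\Gamma$ hold, $\alpha$ holds. The language $\mathcal{L}_T$ is $\alpha::=\varphi\mid\varphi\rightsquigarrow\varphi\mid B(\alpha)\mid\alpha*\alpha\mid\neg\alpha$ ($\varphi$ propositional,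 $*$ binary connective). A Trust model is $\mathcal{M}=\langle S,(S_i)_{i\in I},(\succeq_i)_{i\in I},R,V\rangle$ where $R\subseteq S\times S$ is serial and transitive, $(S_i)_{i\in I}$ is a partition of $S$, each $\succeq_i\subseteq S_i\times S_i$ is arbitrary, $V$ assigns to each variable a subset of $S$, and for each $i$ and each propositional $\varphi$: $\|\varphi\|_i\neq\emptyset\Rightarrow\mathit{most}(\|\varphi\|_i)\neq\emptyset$, where $\|\varphi\|_i=\{v\in S_i:\mathcal{M},v\models\varphi\}$ and $\mathit{most}(\|\varphi\|_i)=\{s\in\|\varphi\|_i:\forall v\in\|\varphi\|_i\,(v\succeq_i s\Rightarrow s\succeq_i v)\}$. Truth: $s\models p$ iff $s\in V(p)$; Boolean clauses as usual; $s\models\varphi\rightsquigarrow\psi$ iff $\mathit{most}(\|\varphi\|_i)\subseteq\|\psi\|_i$ for the $i$ with $s\in S_i$; $s\models B(\alpha)$ iff $v\models\alpha$ for all $v$ with $sRv$. $\Gamma\models\alpha$ means: in every Trust model, at every state where all of $\Gamma$ hold, $\alpha$ holds. Translation $^*$: $\varphi^*=\varphi$ for propositional $\varphi$, $(\Box\varphi)^*=\neg\varphi\rightsquigarrow\bot$, $(\lozenge\varphi)^*=\neg(\varphi\rightsquigarrow\bot)$, $(\bigcirc(\psi/\varphi))^*=\varphi\rightsquigarrow\psi$, commuting with Boolean connectives. *)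

From Stdlib Require Import Classical.

Inductive PForm : Type :=
| PVar : nat -> PForm
| PBot : PForm
| PAnd : PForm -> PForm -> PForm
| POr  : PForm -> PForm -> PForm
| PImp : PForm -> PForm -> PForm
| PIff : PForm -> PForm -> PForm
| PNeg : PForm -> PForm.

Inductive FForm : Type :=
| FVar : nat -> FForm
| FBot : FForm
| FAnd : FForm -> FForm -> FForm
| FOr  : FForm -> FForm -> FForm
| FImp : FForm -> FForm -> FForm
| FIff : FForm -> FForm -> FForm
| FNeg : FForm -> FForm
| FBox : FForm -> FForm
| FDia : FForm -> FForm
| FObl : FForm -> FForm -> FForm.  (* FObl psi phi = O(psi/phi) *)

Fixpoint to_prop (a : FForm) : option PForm :=
  match a with
  | FVar n => Some (PVar n)
  | FBot => Some PBot
  | FAnd a b => match to_prop a, to_prop b with Some p, Some q => Some (PAnd p q) | _, _ => None end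
  | FOr a b => match to_prop a, to_prop b with Some p, Some q => Some (POr p q) | _, _ => None end
  | FImp a b => match to_prop a, to_prop b with Some p, Some q => Some (PImp p q) | _, _ => None end
  | FIff a b => match to_prop a, to_prop b with Some p, Some q => Some (PIff p q) | _, _ => None end
  | FNeg a => match to_prop a with Some p => Some (PNeg p) | None => None end
  | FBox _ | FDia _ | FObl _ _ => None
  end.

Definition is_prop (a : FForm) : Prop := exists p, to_prop a = Some p.

Fixpoint flat (a : FForm) : Prop :=
  match a with
  | FVar _ | FBot => True
  | FAnd a b | FOr a b | FImp a b | FIff a b => flat a /\ flat b
  | FNeg a => flat a
  | FBox a | FDia a => is_prop a
  | FObl b a => is_prop b /\ is_prop a
  end.

Record PrefModel : Type := {
  pS : Type;
  pref : pS -> pS -> Prop;       (* s >= t *)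
  pV : nat -> pS -> Prop
}.

Definition most {S : Type} (ge : S -> S -> Prop) (X : S -> Prop) : S -> Prop :=
  fun s => X s /\ forall v, X v -> ge v s -> ge s v.

Fixpoint psat (M : PrefModel) (s : pS M) (a : FForm) : Prop :=
  match a with
  | FVar n => pV M n s
  | FBot => False
  | FAnd a b => psat M s a /\ psat M s b
  | FOr a b => psat M s a \/ psat M s b
  | FImp a b => psat M s a -> psat M s b
  | FIff a b => (psat M s a <-> psat M s b)
  | FNeg a => ~ psat M s a
  | FBox a => forall t, psat M t a
  | FDia a => exists t, psat M t a
  | FObl b a => forall t, most (pref M) (fun u => psat M u a) t -> psat M t b
  end.

Definition limitedness (M : PrefModel) : Prop :=
  forall a : FForm, (exists s, psat M s a) ->
    exists s, most (pref M) (fun u => psat M u a) s.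

Definition F_conseq (Gamma : FForm -> Prop) (a : FForm) : Prop :=
  forall M : PrefModel, limitedness M ->
    forall s : pS M, (forall g, Gamma g -> psat M s g) -> psat M s a.

Inductive LForm : Type :=
| LProp : PForm -> LForm
| LArr  : PForm -> PForm -> LForm
| LB    : LForm -> LForm
| LAnd  : LForm -> LForm -> LForm
| LOr   : LForm -> LForm -> LForm
| LImp  : LForm -> LForm -> LForm
| LIff  : LForm -> LForm -> LForm
| LNeg  : LForm -> LForm.

(** * Trust models.  The partition (S_i)_{i in I} is given by the map
    [cell : S -> I] sending each state to the index of its block. *)
Record TrustModel : Type := {
  tS : Type;
  tI : Type;
  cell : tS -> tI;
  tpref : tI -> tS -> tS -> Prop;
  tR : tS -> tS -> Prop;
  tV : nat -> tS -> Prop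
}.

Fixpoint tpsat (M : TrustModel) (s : tS M) (p : PForm) : Prop :=
  match p with
  | PVar n => tV M n s
  | PBot => False
  | PAnd a b => tpsat M s a /\ tpsat M s b
  | POr a b => tpsat M s a \/ tpsat M s b
  | PImp a b => tpsat M s a -> tpsat M s b
  | PIff a b => (tpsat M s a <-> tpsat M s b)
  | PNeg a => ~ tpsat M s a
  end.

Definition truth_i (M : TrustModel) (i : tI M) (p : PForm) : tS M -> Prop :=
  fun v => cell M v = i /\ tpsat M v p.

Definition is_trust_model (M : TrustModel) : Prop :=
  (forall s, exists t, tR M s t) /\
  (forall s t u, tR M s t -> tR M t u -> tR M s u) /\
  (forall i s t, tpref M i s t -> cell M s = i /\ cell M t = i) /\
  (forall i (p : PForm), (exists v, truth_i M i p v) ->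
      exists s, most (tpref M i) (truth_i M i p) s).

Fixpoint tsat (M : TrustModel) (s : tS M) (a : LForm) : Prop :=
  match a with
  | LProp p => tpsat M s p
  | LArr p q => forall t, most (tpref M (cell M s)) (truth_i M (cell M s) p) t ->
                          truth_i M (cell M s) q t
  | LB a => forall v, tR M s v -> tsat M v a
  | LAnd a b => tsat M s a /\ tsat M s b
  | LOr a b => tsat M s a \/ tsat M s b
  | LImp a b => tsat M s a -> tsat M s b
  | LIff a b => (tsat M s a <-> tsat M s b)
  | LNeg a => ~ tsat M s a
  end.

Definition T_conseq (Gamma : LForm -> Prop) (a : LForm) : Prop :=
  forall M : TrustModel, is_trust_model M ->
    forall s : tS M, (forall g, Gamma g -> tsat M s g) -> tsat M s a.

(** * Translation ^*  (meaningful on flat formulas; on non-flat modal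
    arguments it returns an arbitrary default). *)
Fixpoint trans (a : FForm) : LForm :=
  match a with
  | FVar n => LProp (PVar n)
  | FBot => LProp PBot
  | FAnd a b => LAnd (trans a) (trans b)
  | FOr a b => LOr (trans a) (trans b)
  | FImp a b => LImp (trans a) (trans b)
  | FIff a b => LIff (trans a) (trans b)
  | FNeg a => LNeg (trans a)
  | FBox a => match to_prop a with
              | Some p => LArr (PNeg p) PBot
              | None => LProp PBot end
  | FDia a => match to_prop a with
              | Some p => LNeg (LArr p PBot)
              | None => LProp PBot end
  | FObl b a => match to_prop b, to_prop a with
                | Some q, Some p => LArr p q
                | _, _ => LProp PBot end
  end.

Definition trans_set (Gamma : FForm -> Prop) : LForm -> Prop :=
  fun b => exists g, Gamma g /\ b = trans g.

(** Every cell of a trust model, with the restricted preference and valuation,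
    is a preference model, and every preference model is a one-cell trust model.
    A translated flat formula only looks at the cell of the current state: the
    belief modality never occurs in it, and [□φ] becomes "the cell has no best
    [¬φ]-state" ([◇φ] dually), which by limitedness means that the cell has no
    [¬φ]-state at all.  So truth of flat formulas is preserved in both
    directions along such a correspondence.  Limitedness also transfers: in a
    preference model every formula of F is equivalent to a propositional one,
    because modal formulas have the same truth value at every state. *)

From Stdlib Require Import Classical.

Lemma most_ext {S : Type} (ge : S -> S -> Prop) (A B : S -> Prop) :
  (forall x, A x <-> B x) -> forall x, most ge A x <-> most ge B x.
Proof.
  intros HAB x; unfold most.
  split; intros [HA Hmax]; split; try apply HAB; auto;
    intros v Hv; apply Hmax, HAB, Hv.
Qed.

Fixpoint emb (p : PForm) : FForm :=
  match p with
  | PVar n => FVar n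
  | PBot => FBot
  | PAnd a b => FAnd (emb a) (emb b)
  | POr a b => FOr (emb a) (emb b)
  | PImp a b => FImp (emb a) (emb b)
  | PIff a b => FIff (emb a) (emb b)
  | PNeg a => FNeg (emb a)
  end.

Lemma to_prop_emb (p : PForm) : to_prop (emb p) = Some p.
Proof. induction p; simpl; rewrite ?IHp, ?IHp1, ?IHp2; reflexivity. Qed.

Lemma psat_constant_equiv_emb (P : PrefModel) (a : FForm) :
  (forall x y, psat P x a -> psat P y a) ->
  exists p, forall x, psat P x a <-> psat P x (emb p).
Proof.
  intros Hconst.
  destruct (classic (exists x, psat P x a)) as [[x0 Hx0]|Hnone].
  - exists (PNeg PBot); simpl; split; [tauto|intros _; exact (Hconst x0 x Hx0)].
  - exists PBot; simpl; split; [|tauto]; intros Hx; apply Hnone; exists x; exact Hx.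
Qed.

Lemma psat_equiv_emb (P : PrefModel) (a : FForm) :
  exists p, forall x, psat P x a <-> psat P x (emb p).
Proof.
  induction a as [n| |a1 [p1 H1] a2 [p2 H2]|a1 [p1 H1] a2 [p2 H2]
                 |a1 [p1 H1] a2 [p2 H2]|a1 [p1 H1] a2 [p2 H2]|a [p H]| | |];
    [ exists (PVar n) | exists PBot | exists (PAnd p1 p2) | exists (POr p1 p2)
    | exists (PImp p1 p2) | exists (PIff p1 p2) | exists (PNeg p)
    | apply psat_constant_equiv_emb; simpl; tauto .. ];
    intros x; simpl; rewrite ?H, ?H1, ?H2; tauto.
Qed.

Lemma tsat_LArr_bot (M : TrustModel) (s : tS M) (p : PForm) :
  is_trust_model M ->
  tsat M s (LArr p PBot) <-> forall v, ~ truth_i M (cell M s) p v.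
Proof.
  intros (_ & _ & _ & Hlim); simpl; split.
  - intros Hbot v Hv.
    destruct (Hlim _ p (ex_intro _ v Hv)) as [t Ht].
    exact (proj2 (Hbot t Ht)).
  - intros Hempty t [Ht _]; destruct (Hempty t Ht).
Qed.

Record cell_embedding (M : TrustModel) (P : PrefModel) (i : tI M)
    (e : pS P -> tS M) : Prop := {
  embedding_cell : forall x, cell M (e x) = i;
  embedding_onto : forall v, cell M v = i -> exists x, e x = v;
  embedding_pref : forall x y, pref P x y <-> tpref M i (e x) (e y);
  embedding_val : forall n x, pV P n x <-> tV M n (e x)
}.

Arguments embedding_cell {M P i e}.
Arguments embedding_onto {M P i e}.
Arguments embedding_pref {M P i e}.
Arguments embedding_val {M P i e}.

Section CellEmbedding.

Variables (M : TrustModel) (P : PrefModel) (i : tI M) (e : pS P -> tS M).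
Hypothesis He : cell_embedding M P i e.

Lemma embedding_forall (Q : tS M -> Prop) :
  (forall x, Q (e x)) <-> (forall v, cell M v = i -> Q v).
Proof.
  split.
  - intros HQ v Hv; destruct (embedding_onto He v Hv) as [x <-]; apply HQ.
  - intros HQ x; apply HQ, (embedding_cell He).
Qed.

Lemma psat_to_prop_embedding (a : FForm) (p : PForm) :
  to_prop a = Some p -> forall x, psat P x a <-> tpsat M (e x) p.
Proof.
  revert p; induction a; simpl; intros p Hp x; try discriminate;
    try (destruct (to_prop a1) as [p1|], (to_prop a2) as [p2|]; try discriminate;
         injection Hp as <-; simpl; rewrite IHa1, IHa2 by reflexivity; tauto).
  - injection Hp as <-; apply (embedding_val He).
  - injection Hp as <-; simpl; tauto.
  - destruct (to_prop a) as [p1|]; try discriminate.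
    injection Hp as <-; simpl; rewrite IHa by reflexivity; tauto.
Qed.

Lemma most_embedding (A : tS M -> Prop) (x : pS P) :
  most (pref P) (fun u => A (e u)) x <->
  most (tpref M i) (fun v => cell M v = i /\ A v) (e x).
Proof.
  unfold most; split.
  - intros [HAx Hmax]; split; [split; [apply (embedding_cell He)|exact HAx]|].
    intros v [Hv HAv]; destruct (embedding_onto He v Hv) as [y <-].
    rewrite <- !(embedding_pref He); apply Hmax, HAv.
  - intros [[_ HAx] Hmax]; split; [exact HAx|].
    intros y HAy; rewrite !(embedding_pref He); apply Hmax.
    split; [apply (embedding_cell He)|exact HAy].
Qed.

Lemma most_to_prop_embedding (a : FForm) (p : PForm) :
  to_prop a = Some p -> forall x,
  most (pref P) (fun u => psat P u a) x <-> most (tpref M i) (truth_i M i p) (e x).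
Proof.
  intros Hp x; rewrite <- (most_embedding (fun v => tpsat M v p)).
  apply most_ext; intros u; apply (psat_to_prop_embedding a p Hp).
Qed.

Lemma limitedness_embedding : is_trust_model M -> limitedness P.
Proof.
  intros (_ & _ & _ & Hlim) a [x Hx].
  destruct (psat_equiv_emb P a) as [p Hp].
  assert (Hmost := most_to_prop_embedding (emb p) p (to_prop_emb p)).
  destruct (Hlim i p) as [t Ht].
  { exists (e x); split; [apply (embedding_cell He)|].
    apply (psat_to_prop_embedding (emb p)); [apply to_prop_emb|apply Hp, Hx]. }
  destruct (embedding_onto He t (proj1 (proj1 Ht))) as [y <-].
  exists y; rewrite (most_ext _ _ _ Hp); apply Hmost, Ht.
Qed.

Lemma psat_trans_embedding (a : FForm) :
  is_trust_model M -> flat a ->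
  forall x, psat P x a <-> tsat M (e x) (trans a).
Proof.
  intros HM; induction a; simpl; intros Hflat x;
    try (destruct Hflat; rewrite IHa1, IHa2 by assumption; tauto).
  - apply (embedding_val He).
  - tauto.
  - rewrite IHa by assumption; tauto.
  - destruct Hflat as [p Hp]; rewrite Hp, tsat_LArr_bot, (embedding_cell He) by exact HM.
    setoid_rewrite (psat_to_prop_embedding a p Hp).
    rewrite (embedding_forall (fun v => tpsat M v p)); unfold truth_i; simpl.
    split; intros Hall v; specialize (Hall v); [tauto|intros Hv; apply NNPP; tauto].
  - destruct Hflat as [p Hp]; rewrite Hp.
    change ((exists t, psat P t a) <-> ~ tsat M (e x) (LArr p PBot)).
    rewrite tsat_LArr_bot, (embedding_cell He) by exact HM.
    setoid_rewrite (psat_to_prop_embedding a p Hp).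
    split.
    + intros [y Hy] Hempty; apply (Hempty (e y)); split; [apply (embedding_cell He)|exact Hy].
    + intros Hne; apply NNPP; intros Hnone; apply Hne; intros v [Hv Hpv].
      destruct (embedding_onto He v Hv) as [y <-]; apply Hnone; exists y; exact Hpv.
  - destruct Hflat as [[q Hq] [p Hp]]; rewrite Hq, Hp; simpl; rewrite (embedding_cell He).
    setoid_rewrite (most_to_prop_embedding a2 p Hp).
    setoid_rewrite (psat_to_prop_embedding a1 q Hq).
    rewrite (embedding_forall (fun v => most (tpref M i) (truth_i M i p) v -> tpsat M v q)).
    split.
    + intros Hall v Hmost; pose proof (proj1 (proj1 Hmost)) as Hv.
      split; [exact Hv|exact (Hall v Hv Hmost)].
    + intros Hall v _ Hmost; exact (proj2 (Hall v Hmost)).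
Qed.

End CellEmbedding.

Lemma sat_trans_set_embedding (M : TrustModel) (P : PrefModel) (i : tI M)
    (e : pS P -> tS M) (Gamma : FForm -> Prop) (x : pS P) :
  is_trust_model M -> cell_embedding M P i e -> (forall g, Gamma g -> flat g) ->
  (forall g, Gamma g -> psat P x g) <-> (forall b, trans_set Gamma b -> tsat M (e x) b).
Proof.
  intros HM He HGamma; split.
  - intros Hsat b [g [Hg ->]].
    apply (psat_trans_embedding M P i e He g HM (HGamma g Hg)), Hsat, Hg.
  - intros Hsat g Hg.
    apply (psat_trans_embedding M P i e He g HM (HGamma g Hg)), Hsat.
    exists g; split; [exact Hg|reflexivity].
Qed.

Definition cell_model (M : TrustModel) (i : tI M) : PrefModel := {|
  pS := {v : tS M | cell M v = i};
  pref := fun x y => tpref M i (proj1_sig x) (proj1_sig y);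
  pV := fun n x => tV M n (proj1_sig x)
|}.

Lemma cell_model_embedding (M : TrustModel) (i : tI M) :
  cell_embedding M (cell_model M i) i (@proj1_sig _ _).
Proof.
  split; simpl; try tauto.
  - intros [v Hv]; exact Hv.
  - intros v Hv; exists (exist _ v Hv); reflexivity.
Qed.

Definition single_cell_model (P : PrefModel) : TrustModel := {|
  tS := pS P;
  tI := unit;
  cell := fun _ => tt;
  tpref := fun _ => pref P;
  tR := fun _ _ => True;
  tV := pV P
|}.

Lemma single_cell_embedding (P : PrefModel) :
  cell_embedding (single_cell_model P) P tt (fun x => x).
Proof.
  split; simpl; try tauto.
  intros v _; exists v; reflexivity.
Qed.

Lemma single_cell_trust_model (P : PrefModel) :
  limitedness P -> is_trust_model (single_cell_model P).
Proof.
  intros HP; pose proof (single_cell_embedding P) as He.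
  split; [|split; [|split]]; simpl.
  - intros s; exists s; exact I.
  - intros; exact I.
  - intros [] s t _; split; reflexivity.
  - intros [] p [v [_ Hv]].
    rewrite <- (psat_to_prop_embedding _ _ _ _ He (emb p) p (to_prop_emb p)) in Hv.
    destruct (HP (emb p) (ex_intro _ v Hv)) as [t Ht].
    exists t; apply (most_to_prop_embedding _ _ _ _ He (emb p) p (to_prop_emb p)), Ht.
Qed.

Theorem theorem3 :
  forall (Gamma : FForm -> Prop) (a : FForm),
    (forall g, Gamma g -> flat g) -> flat a ->
    (F_conseq Gamma a <-> T_conseq (trans_set Gamma) (trans a)).
Proof.
  intros Gamma a HGamma Ha; split.
  - intros HF M HM s HGs.
    pose proof (cell_model_embedding M (cell M s)) as He.
    pose (x := exist _ s eq_refl : pS (cell_model M (cell M s))).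
    apply (psat_trans_embedding _ _ _ _ He a HM Ha x).
    apply HF; [exact (limitedness_embedding _ _ _ _ He HM)|].
    apply (sat_trans_set_embedding _ _ _ _ _ x HM He HGamma), HGs.
  - intros HT P HP s HGs.
    pose proof (single_cell_embedding P) as He.
    pose proof (single_cell_trust_model P HP) as HM.
    apply (psat_trans_embedding _ _ _ _ He a HM Ha s).
    apply HT; [exact HM|].
    apply (sat_trans_set_embedding _ _ _ _ _ s HM He HGamma), HGs.
Qed.
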